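(* Let $x_1,\dots,x_n\in[0,1]^2$ and $r,s$ with $0<s<r^2/10^{10}$ (and $r\ge s$) be such that $(x_1,\dots,x_n;r,s)$ satisfies condition (M). Then $c(G(x_1,\dots,x_n;r))\le 2$.
   Context: For $V=\{x_1,\dots,x_n\}\subset[0,1]^2$ and $r\ge s>0$, the tuple $(x_1,\dots,x_n;r,s)$ satisfies condition (M) if for every $x\in[0,1]^2$ and every $y\in B(x,r)\cap[0,1]^2$ we have $V\cap B(x,r)\cap B(y,s)\neq\emptyset$, where $B(x,\rho)$ is the closed Euclidean ball. $G(x_1,\dots,x_n;r)$ is the geometric graph on vertices $x_1,\dots,x_n$ with $x_i,x_j$ adjacent iff $\|x_i-x_j\|\le r$. The cop number $c(G)$ is the minimum number of cops that have a strategy guaranteeing capture of the robber in finite time in the standard cops and robbers game (agents alternately move along an edge or stay put; full information; capture means a cop occupies the robber's vertex). *)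

From Stdlib Require Import Reals Lra.
Open Scope R_scope.

Definition pt := (R * R)%type.

Definition edist (p q : pt) : R :=
  sqrt ((fst p - fst q) ^ 2 + (snd p - snd q) ^ 2).

Definition in_unit_square (p : pt) : Prop :=
  0 <= fst p <= 1 /\ 0 <= snd p <= 1.

Definition in_ball (c : pt) (rho : R) (p : pt) : Prop := edist c p <= rho.

Definition condM (n : nat) (x : nat -> pt) (r s : R) : Prop :=
  forall p q : pt, in_unit_square p -> in_unit_square q -> in_ball p r q ->
    exists i : nat, (i < n)%nat /\ in_ball p r (x i) /\ in_ball q s (x i).

(** Geometric graph G(x_0..x_{n-1}; r): vertices are the indices 0..n-1,
    i ~ j iff ||x_i - x_j|| <= r. *)
Definition geo_adj (x : nat -> pt) (r : R) (i j : nat) : Prop :=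
  edist (x i) (x j) <= r.

(** Cops and robbers on a graph with vertex set {0..n-1} and adjacency E,
    played with k cops (cop j, j < k, sits at vertex c j). *)
Section CopsRobbers.
Variables (n : nat) (E : nat -> nat -> Prop) (k : nat).

Definition captured (c : nat -> nat) (rb : nat) : Prop :=
  exists j, (j < k)%nat /\ c j = rb.

Definition cop_move (c c' : nat -> nat) : Prop :=
  forall j, (j < k)%nat -> (c' j < n)%nat /\ (c' j = c j \/ E (c j) (c' j)).

Definition rob_move (rb rb' : nat) : Prop :=
  (rb' < n)%nat /\ (rb' = rb \/ E rb rb').

(** [CopTurn c rb]: cops to move, and the cops can force capture in finitely
    many moves; [RobTurn c rb]: same, robber to move.  Inductive = finite time. *)
Inductive CopTurn : (nat -> nat) -> nat -> Prop :=
| ct_cap : forall c rb, captured c rb -> CopTurn c rb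
| ct_move : forall c c' rb, cop_move c c' -> RobTurn c' rb -> CopTurn c rb
with RobTurn : (nat -> nat) -> nat -> Prop :=
| rt_cap : forall c rb, captured c rb -> RobTurn c rb
| rt_move : forall c rb,
    (forall rb', rob_move rb rb' -> CopTurn c rb') -> RobTurn c rb.

Definition cops_win : Prop :=
  exists c : nat -> nat, (forall j, (j < k)%nat -> (c j < n)%nat) /\
    forall rb, (rb < n)%nat -> CopTurn c rb.

End CopsRobbers.

Definition cop_number_le (n : nat) (E : nat -> nat -> Prop) (m : nat) : Prop :=
  exists k, (k <= m)%nat /\ cops_win n E k.

From Stdlib Require Import Reals Lra Psatz Lia ZArith.
Open Scope R_scope.

(* If r > 3/2 the graph is complete and one cop wins at once.  Otherwise
   s <= r/10^6, and both cops start at a vertex near the corner (0, 0).  The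
   second cop chases the robber horizontally: it climbs the left wall until it
   is level with the robber (up to a precision eps), and from then on it stays
   level with him while pushing him to the right, never coming closer than
   r/10 horizontally.  The first cop does the same with the coordinates
   exchanged.  Each round a cop aims at an ideal target point, and condition
   (M) supplies a vertex within s of it, which costs 2s of precision per round.
   A potential in [0, 6] measuring the cops' remaining work drops by r/4 per
   round: the robber's move is short in one of the two coordinates, which lets
   the corresponding cop advance by r/2 while the other loses at most r/5.
   Hence within 24/r + 1 rounds, during which the precision stays below
   r/1000 since s < r^2/10^10, the robber is caught. *)

Lemma Rabs_le_iff x a : Rabs x <= a <-> -a <= x <= a.
Proof. unfold Rabs; destruct (Rcase_abs x); split; intros; lra. Qed.

Lemma le_of_sq_le c d : 0 <= d -> c * c <= d * d -> c <= d.
Proof. intros. destruct (Rle_dec c 0); nra. Qed.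

Lemma Rabs_le_of_sq c d : 0 <= d -> c * c <= d * d -> Rabs c <= d.
Proof. intros. apply Rabs_le_iff. split; nra. Qed.

Lemma sq_sum_bound u w d : 0 <= d -> u^2 + w^2 <= d^2 -> Rabs u <= d /\ Rabs w <= d.
Proof. intros. rewrite !Rabs_le_iff. split; split; nra. Qed.

(* A cop at (px, py) chases the robber horizontally:
   first it becomes [aligned] with the robber (same height up to [eps]), then
   it keeps that alignment while pushing the robber towards the right side. *)
Definition aligned (eps py Y0 : R) : Prop := Rabs (Y0 - py) <= eps.

(* The invariant kept by a cop at (px, py) against the robber's position
   (X0, Y0) at the moment the cop arrived: the cop is at the left wall or the
   robber is at least about r/10 to its right; and the cop is aligned with the
   robber or is still climbing the left wall from below him. *)
Definition guards (r s eps px py X0 Y0 : R) : Prop :=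
  (px <= s \/ r/10 - s <= X0 - px) /\
  (aligned eps py Y0 \/ (px <= eps /\ eps < Y0 - py)).

(* Remaining work of the cop: distance to the right wall once aligned, and
   3 minus its height while climbing.  It lies in [0, 3]. *)
Definition progress (eps px py Y0 : R) : R :=
  if Rle_dec (Rabs (Y0 - py)) eps then 1 - px else 3 - py.

(* The algebraic core of [aligned_reach] below: an aligned robber that stays
   to the right of the cop (g = X - px in [0, r/10)) but escapes by moving
   backwards (a = X - X0 < 0) must move almost vertically, so a cop whose
   horizontal step h is at least a - s still has vertical reach V >= |b| - s. *)
Lemma backward_move_reach r s eps a b e g h V :
  0 < r -> 0 < s -> s <= r/1000000 -> 0 <= eps <= r/1000 ->
  a*a + b*b <= r*r -> -eps <= e <= eps -> 0 <= g < r/10 ->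
  r*r < g*g + (e+b)*(e+b) -> a < 0 -> a - s <= h -> h < 0 ->
  V*V = r*r - h*h -> 0 <= V -> Rabs b <= V + s.
Proof.
  intros.
  assert (Hb : 97/100*r*r <= b*b).
  { assert (K : 99/100*r*r < (e+b)*(e+b)) by nra.
    destruct (Rle_dec 0 (e+b)).
    - assert (99/100*r < e+b) by nra. nra.
    - assert (99/100*r < -(e+b)) by nra. nra. }
  assert (Ha : -a < 2/10*r) by nra.
  assert (HV : 9/10*r <= V) by (apply le_of_sq_le; nra).
  apply Rabs_le_iff. split; nra.
Qed.

Section OneCop.
Variables r s eps : R.
Hypothesis Hr : 0 < r.
Hypothesis Hr_small : r <= 3/2.
Hypothesis Hs : 0 < s.
Hypothesis Hs_small : s <= r / 1000000.
Hypothesis Hs_eps : s <= eps.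
Hypothesis Heps_small : eps <= r / 1000.

Variables px py X0 Y0 X Y : R.
Hypothesis Hpx : 0 <= px <= 1.
Hypothesis Hpy : 0 <= py <= 1.
Hypothesis HX : 0 <= X <= 1.
Hypothesis HY : 0 <= Y <= 1.
Hypothesis Hmove : (X - X0)^2 + (Y - Y0)^2 <= r^2.
Hypothesis Hfar : r^2 < (X - px)^2 + (Y - py)^2.
Hypothesis Hwall : px <= s \/ r/10 - s <= X0 - px.
Hypothesis Hphase : aligned eps py Y0 \/ (px <= eps /\ eps < Y0 - py).

(* The cop's target (tx, py + v): it moves right by the horizontal room
   [beta] left by the robber's vertical offset [dy], but not closer than r/10
   to the robber nor past the left wall; with the remaining reach [V] it
   matches the robber's height as well as possible. *)
Let dy := Y - py.
Let beta := sqrt (r^2 - dy^2).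
Let tx := Rmax 0 (Rmin (X - r/10) (px + beta)).
Let h := tx - px.
Let V := sqrt (r^2 - h^2).
Let v := Rmax (- V) (Rmin dy V).

Lemma beta_nonneg : 0 <= beta.
Proof. apply sqrt_pos. Qed.

Lemma beta_sq : dy^2 <= r^2 -> beta * beta = r^2 - dy^2.
Proof. intros. apply sqrt_sqrt. lra. Qed.

Lemma beta_zero : r^2 < dy^2 -> beta = 0.
Proof. intros. apply sqrt_neg_0. lra. Qed.

Lemma beta_le_r : beta <= r.
Proof.
  destruct (Rle_dec (dy^2) (r^2)).
  - apply le_of_sq_le; [lra|]. rewrite beta_sq by lra. nra.
  - rewrite beta_zero by lra. lra.
Qed.

(* As the robber is not captured, [beta] does not exceed the horizontal gap. *)
Lemma beta_le_gap : beta <= Rabs (X - px).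
Proof.
  destruct (Rle_dec (dy^2) (r^2)).
  - apply le_of_sq_le; [apply Rabs_pos|].
    assert (Habs : Rabs (X - px) * Rabs (X - px) = (X - px) * (X - px))
      by (rewrite <- Rabs_mult; apply Rabs_pos_eq, Rle_0_sqr).
    rewrite beta_sq by lra. unfold dy in *. nra.
  - rewrite beta_zero by lra. apply Rabs_pos.
Qed.

Lemma tx_nonneg : 0 <= tx.
Proof. apply Rmax_l. Qed.

Lemma tx_wall : tx = 0 \/ tx <= X - r/10.
Proof.
  unfold tx. apply Rmax_case; [now left|right]. apply Rmin_l.
Qed.

Lemma tx_above : X - r/10 <= tx \/ px + beta <= tx.
Proof.
  assert (Hm : Rmin (X - r/10) (px + beta) <= tx) by apply Rmax_r.
  revert Hm. apply Rmin_case; auto.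
Qed.

Lemma h_le_beta : h <= beta.
Proof.
  unfold h. destruct tx_wall as [E|_].
  - rewrite E. pose proof beta_nonneg. lra.
  - unfold tx. apply Rmax_case; [pose proof beta_nonneg; lra|].
    pose proof (Rmin_r (X - r/10) (px + beta)). lra.
Qed.

(* An aligned robber at least r/10 - s to the right of the cop cannot jump to
   its left within one move without being captured. *)
Lemma robber_stays_right :
  aligned eps py Y0 -> r/10 - s <= X0 - px -> 0 <= X - px.
Proof.
  unfold aligned. rewrite Rabs_le_iff. intros He Hg.
  destruct (Rle_dec 0 (X - px)) as [|Hneg]; [assumption|exfalso].
  set (a := X - X0) in *. set (b := Y - Y0) in *.
  set (e := Y0 - py) in *. set (g := X0 - px) in *.
  replace (X - px) with (g + a) in * by (unfold g, a; ring).
  replace (Y - py) with (e + b) in * by (unfold e, b; ring).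
  assert (-r <= b <= r) by (split; nra).
  assert ((g+a)^2 <= a^2 - g^2) by nra.
  assert ((e+b)^2 <= b^2 + 2*r*eps + eps^2) by nra.
  assert ((r/10 - s)^2 <= g^2) by nra.
  nra.
Qed.

(* The cop never retreats by more than r/10, so its step stays within reach. *)
Lemma h_lower : - (r/10) <= h.
Proof.
  pose proof tx_nonneg. unfold h.
  destruct Hphase as [Hal|[Hp _]]; [|lra].
  destruct Hwall as [Hw|Hw]; [lra|].
  pose proof (robber_stays_right Hal Hw). pose proof beta_nonneg.
  destruct tx_above; lra.
Qed.

Lemma V_nonneg : 0 <= V.
Proof. apply sqrt_pos. Qed.

Lemma V_sq : V * V = r^2 - h^2.
Proof.
  apply sqrt_sqrt. pose proof h_lower. pose proof h_le_beta. pose proof beta_le_r.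
  assert (-r <= h <= r) by lra. nra.
Qed.

Lemma V_large d : 0 < d <= r -> -d <= h <= d -> r - d <= V.
Proof.
  intros. pose proof V_nonneg. pose proof V_sq.
  apply le_of_sq_le; [lra|]. nra.
Qed.

Lemma v_cases :
  (-V <= dy <= V /\ v = dy) \/ (V < dy /\ v = V) \/ (dy < -V /\ v = -V).
Proof.
  pose proof V_nonneg. unfold v, Rmax, Rmin.
  destruct (Rle_dec dy V); destruct (Rle_dec (-V) dy); destruct (Rle_dec (-V) V); lra.
Qed.

Lemma target_in_reach : h^2 + v^2 <= r^2.
Proof.
  pose proof V_nonneg. pose proof V_sq.
  assert (v * v <= V * V) by (destruct v_cases as [[? ->]|[[? ->]|[? ->]]]; nra).
  nra.
Qed.

Lemma target_in_square : 0 <= tx <= 1 /\ 0 <= py + v <= 1.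
Proof.
  pose proof tx_nonneg. pose proof V_nonneg.
  split; [destruct tx_wall; lra|].
  destruct v_cases as [[? ->]|[[? ->]|[? ->]]]; unfold dy in *; lra.
Qed.

Lemma aligned_advance : aligned eps py Y0 -> beta - r/10 <= h.
Proof.
  intros Hal. pose proof beta_le_gap. pose proof tx_nonneg. unfold h.
  destruct (Rle_dec 0 (X - px)) as [Hg|Hg].
  - rewrite Rabs_pos_eq in * by lra. destruct tx_above; lra.
  - rewrite Rabs_left in * by lra. destruct Hwall as [Hw|Hw].
    + lra.
    + pose proof (robber_stays_right Hal Hw). lra.
Qed.

Lemma reach_forward : 0 <= h -> dy^2 <= r^2 -> Rabs dy <= V.
Proof.
  intros Hh Hdy. pose proof V_nonneg. pose proof V_sq. pose proof h_le_beta.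
  pose proof (beta_sq Hdy).
  apply Rabs_le_of_sq; [assumption|]. assert (h * h <= beta * beta) by nra. nra.
Qed.

Lemma robber_vertical_move : Rabs (Y - Y0) <= r.
Proof. apply (sq_sum_bound (X - X0)); [lra|assumption]. Qed.

Lemma reach_of_vertical :
  aligned eps py Y0 -> Rabs (Y - Y0) <= V + s -> Rabs dy <= V + eps + s.
Proof.
  intros Hal Hb. replace dy with ((Y0 - py) + (Y - Y0)) by (unfold dy; ring).
  eapply Rle_trans; [apply Rabs_triang|]. unfold aligned in Hal. lra.
Qed.

(* While aligned, the cop's target is within eps + s of the robber's height;
   this is what keeps the alignment at precision eps + 2s. *)
Lemma aligned_reach : aligned eps py Y0 -> Rabs dy <= V + eps + s.
Proof.
  intros Hal. pose proof tx_nonneg. pose proof beta_nonneg. pose proof h_le_beta.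
  pose proof robber_vertical_move.
  destruct (Rle_dec 0 h) as [Hh|Hh].
  - destruct (Rle_dec (dy^2) (r^2)) as [Hdy|Hdy].
    + pose proof (reach_forward Hh Hdy). lra.
    + apply reach_of_vertical; [exact Hal|].
      assert (r - s <= V) by (apply V_large; rewrite ?beta_zero in *; lra). lra.
  - assert (Hback : X - r/10 <= tx) by (unfold h in Hh; destruct tx_above; lra).
    apply reach_of_vertical; [exact Hal|].
    destruct Hwall as [Hw|Hw].
    + assert (r - s <= V) by (apply V_large; unfold h in *; lra). lra.
    + pose proof (robber_stays_right Hal Hw).
      destruct (Rle_dec X0 X).
      * assert (r - s <= V) by (apply V_large; unfold h in *; lra). lra.
      * unfold aligned in Hal. apply Rabs_le_iff in Hal.
        pose proof V_nonneg. pose proof V_sq.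
        apply (backward_move_reach r s eps (X - X0) (Y - Y0) (Y0 - py) (X - px) h V);
          unfold h in *; try lra; simpl in *; try nra.
Qed.

Lemma climb_target :
  px <= eps -> eps < Y0 - py ->
  v = dy \/ (v = V /\ V < dy /\ h <= 0 /\ r - eps <= V).
Proof.
  intros Hp Hup. pose proof tx_nonneg.
  assert (Hb := robber_vertical_move). apply Rabs_le_iff in Hb.
  destruct (Rle_dec h 0) as [Hh|Hh].
  - assert (HV : r - eps <= V) by (apply V_large; unfold h in *; lra).
    destruct v_cases as [[_ E]|[[Hd E]|[Hd E]]]; [now left|now right|].
    exfalso. unfold dy in Hd. lra.
  - left. pose proof h_le_beta.
    destruct (Rle_dec (dy^2) (r^2)) as [Hdy|Hdy]; [|rewrite beta_zero in *; lra].
    assert (Hreach := reach_forward (Rlt_le _ _ (Rnot_le_lt _ _ Hh)) Hdy).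
    apply Rabs_le_iff in Hreach.
    destruct v_cases as [[_ E]|[[Hd E]|[Hd E]]]; lra.
Qed.

(* Condition (M) only gives a vertex (qx, qy) within s of the target; the
   guarantees below hold for any such landing point. *)
Section Landing.
Variables qx qy : R.
Hypothesis Hqx : 0 <= qx <= 1.
Hypothesis Hqy : 0 <= qy <= 1.
Hypothesis Hq : (qx - tx)^2 + (qy - (py + v))^2 <= s^2.

Lemma landing_close : -s <= qx - tx <= s /\ -s <= qy - (py + v) <= s.
Proof.
  destruct (sq_sum_bound _ _ s (Rlt_le _ _ Hs) Hq) as [Hqx' Hqy'].
  now rewrite Rabs_le_iff in Hqx', Hqy'.
Qed.

Lemma landing_wall : qx <= s \/ r/10 - s <= X - qx.
Proof. pose proof landing_close. destruct tx_wall; [left|right]; lra. Qed.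

Lemma landing_aligned :
  aligned eps py Y0 -> aligned (eps + 2*s) qy Y /\ beta - r/10 - s <= qx - px.
Proof.
  intros Hal. pose proof landing_close. pose proof (aligned_advance Hal).
  pose proof V_nonneg. split; [|unfold h in *; lra].
  assert (Hreach := aligned_reach Hal). apply Rabs_le_iff in Hreach.
  assert (Hv : - (eps + s) <= dy - v <= eps + s)
    by (destruct v_cases as [[? E]|[[? E]|[? E]]]; rewrite E; lra).
  unfold aligned. apply Rabs_le_iff. unfold dy in *. lra.
Qed.

Lemma beta_large :
  aligned eps py Y0 -> (Y - Y0)^2 <= r^2/2 -> 7/10 * r <= beta.
Proof.
  unfold aligned. rewrite Rabs_le_iff. intros He Hb.
  assert (Hdy : dy * dy <= 51/100 * r * r).
  { assert (-r <= Y - Y0 <= r) by (split; nra).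
    replace dy with ((Y0 - py) + (Y - Y0)) by (unfold dy; ring). nra. }
  apply le_of_sq_le; [apply beta_nonneg|]. rewrite beta_sq by nra. nra.
Qed.

Lemma landing_climb :
  px <= eps -> eps < Y0 - py ->
  aligned (eps + 2*s) qy Y \/ (qx <= eps + 2*s /\ eps + 2*s < Y - qy /\ r/2 <= qy - py).
Proof.
  intros Hp Hup. pose proof landing_close. unfold aligned.
  destruct (climb_target Hp Hup) as [E|[E [HVd [Hh HV]]]].
  - left. apply Rabs_le_iff. rewrite E in *. unfold dy in *. lra.
  - destruct (Rle_dec (Rabs (Y - qy)) (eps + 2*s)) as [Hal|Hnal]; [now left|right].
    rewrite Rabs_le_iff in Hnal. rewrite E in *. unfold h, dy in *. lra.
Qed.

Lemma landing_progress :
  guards r s (eps + 2*s) qx qy X Y /\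
  progress (eps + 2*s) qx qy Y <= progress eps px py Y0 + r/5 /\
  (~ aligned eps py Y0 \/ (Y - Y0)^2 <= r^2/2 ->
     progress (eps + 2*s) qx qy Y + r/2 <= progress eps px py Y0).
Proof.
  unfold guards, progress.
  destruct (Rle_dec (Rabs (Y0 - py)) eps) as [Hal|Hnal].
  - destruct (landing_aligned Hal) as [Hal' Hgain].
    pose proof beta_nonneg. pose proof landing_wall.
    destruct (Rle_dec (Rabs (Y - qy)) (eps + 2*s)) as [_|C]; [|contradiction].
    split; [tauto|]. split; [lra|].
    intros [C|Hb]; [contradiction|]. pose proof (beta_large Hal Hb). lra.
  - destruct Hphase as [C|[Hp Hup]]; [contradiction|].
    pose proof landing_wall.
    destruct (landing_climb Hp Hup) as [Hal'|[Hq1 [Hq2 Hq3]]].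
    + destruct (Rle_dec (Rabs (Y - qy)) (eps + 2*s)) as [_|C]; [|contradiction].
      split; [tauto|]. split; intros; lra.
    + destruct (Rle_dec (Rabs (Y - qy)) (eps + 2*s)); (split; [tauto|]; split; intros; lra).
Qed.

End Landing.

Lemma cop_step :
  exists tx ty, (0 <= tx <= 1 /\ 0 <= ty <= 1) /\ (tx - px)^2 + (ty - py)^2 <= r^2 /\
    forall qx qy, 0 <= qx <= 1 -> 0 <= qy <= 1 -> (qx - tx)^2 + (qy - ty)^2 <= s^2 ->
      guards r s (eps + 2*s) qx qy X Y /\
      progress (eps + 2*s) qx qy Y <= progress eps px py Y0 + r/5 /\
      (~ aligned eps py Y0 \/ (Y - Y0)^2 <= r^2/2 ->
         progress (eps + 2*s) qx qy Y + r/2 <= progress eps px py Y0).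
Proof.
  exists tx, (py + v). split; [exact target_in_square|]. split.
  - replace (py + v - py) with v by ring. exact target_in_reach.
  - intros qx qy Hqx Hqy Hq. now apply landing_progress.
Qed.

End OneCop.

Definition sqd (p q : pt) : R := (fst p - fst q)^2 + (snd p - snd q)^2.

Lemma sqd_sym p q : sqd p q = sqd q p.
Proof. unfold sqd. ring. Qed.

Lemma sqd_nonneg p q : 0 <= sqd p q.
Proof. unfold sqd. pose proof (pow2_ge_0 (fst p - fst q)). pose proof (pow2_ge_0 (snd p - snd q)). lra. Qed.

Lemma in_ball_iff c rho p : 0 <= rho -> in_ball c rho p <-> sqd c p <= rho^2.
Proof.
  intros Hrho. unfold in_ball, edist. fold (sqd c p). split; intro H.
  - rewrite <- (pow2_sqrt _ (sqd_nonneg c p)). apply pow_incr. split; [apply sqrt_pos|exact H].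
  - rewrite <- (sqrt_pow2 rho Hrho). apply sqrt_le_1_alt. exact H.
Qed.

Lemma in_ball_center c rho : 0 <= rho -> in_ball c rho c.
Proof.
  intros. apply in_ball_iff; [assumption|]. unfold sqd.
  replace ((fst c - fst c)^2 + (snd c - snd c)^2) with 0 by ring. apply pow2_ge_0.
Qed.

Lemma sqd_of_not_in_ball c rho p : 0 <= rho -> ~ in_ball c rho p -> rho^2 < sqd p c.
Proof. intros Hrho H. rewrite sqd_sym. apply Rnot_le_lt. now rewrite <- in_ball_iff. Qed.

(* Exchanging the coordinates turns horizontal chasing into vertical chasing;
   condition (M) and the geometry are invariant under it. *)
Definition swap (p : pt) : pt := (snd p, fst p).

Lemma sqd_swap p q : sqd (swap p) (swap q) = sqd p q.
Proof. unfold sqd, swap; simpl. ring. Qed.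

Lemma in_unit_square_swap p : in_unit_square p -> in_unit_square (swap p).
Proof. unfold in_unit_square, swap; simpl; tauto. Qed.

Lemma in_ball_swap c rho p : 0 <= rho -> in_ball (swap c) rho (swap p) <-> in_ball c rho p.
Proof. intros. rewrite !in_ball_iff, sqd_swap by assumption. reflexivity. Qed.

Lemma swap_involutive p : swap (swap p) = p.
Proof. now destruct p. Qed.

Lemma condM_swap n x r s : 0 <= r -> 0 <= s ->
  condM n x r s -> condM n (fun i => swap (x i)) r s.
Proof.
  intros Hr Hs hM p q Hp Hq Hpq.
  destruct (hM (swap p) (swap q)) as [i [Hi [Hpi Hqi]]];
    [now apply in_unit_square_swap|now apply in_unit_square_swap|now apply in_ball_swap|].
  exists i. rewrite <- (swap_involutive (x i)) in Hpi, Hqi.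
  rewrite in_ball_swap in Hpi, Hqi by assumption. tauto.
Qed.

Definition guards_pt (r s eps : R) (p z : pt) : Prop :=
  guards r s eps (fst p) (snd p) (fst z) (snd z).

Definition progress_pt (eps : R) (p z : pt) : R := progress eps (fst p) (snd p) (snd z).

Lemma cop_step_pt r s eps n x (p z0 z : pt) :
  0 < r -> r <= 3/2 -> 0 < s -> s <= r/1000000 -> s <= eps -> eps <= r/1000 ->
  (forall i, (i < n)%nat -> in_unit_square (x i)) -> condM n x r s ->
  in_unit_square p -> in_unit_square z0 -> in_unit_square z ->
  sqd z z0 <= r^2 -> r^2 < sqd z p -> guards_pt r s eps p z0 ->
  exists i, (i < n)%nat /\ in_ball p r (x i) /\
    guards_pt r s (eps + 2*s) (x i) z /\
    progress_pt (eps + 2*s) (x i) z <= progress_pt eps p z0 + r/5 /\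
    (~ aligned eps (snd p) (snd z0) \/ (snd z - snd z0)^2 <= r^2/2 ->
       progress_pt (eps + 2*s) (x i) z + r/2 <= progress_pt eps p z0).
Proof.
  intros Hr Hr32 Hs Hsr Hse Her hx hM Hp Hz0 Hz Hmove Hfar [Hwall Hphase].
  destruct p as [px py], z0 as [X0 Y0], z as [X Y].
  destruct Hp, Hz0, Hz. unfold sqd in Hmove, Hfar; simpl in *.
  destruct (cop_step r s eps Hr Hr32 Hs Hsr Hse Her px py X0 Y0 X Y)
    as [tx [ty [[Htx Hty] [Hreach Hland]]]]; auto.
  destruct (hM (px, py) (tx, ty)) as [i [Hi [Hpi Hti]]];
    [split; assumption|split; assumption|
     apply in_ball_iff; [lra|]; unfold sqd; simpl; nra|].
  exists i. split; [exact Hi|]. split; [exact Hpi|].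
  apply in_ball_iff in Hti; [|lra]. unfold sqd in Hti. simpl in Hti.
  destruct (hx i Hi). apply Hland; try assumption. nra.
Qed.

(* Two cops: the first chases vertically (in swapped coordinates), the second
   horizontally.  The [potential] is the sum of their progress values. *)
Definition good (r s eps : R) (c1 c2 z : pt) : Prop :=
  guards_pt r s eps (swap c1) (swap z) /\ guards_pt r s eps c2 z.

Definition potential (eps : R) (c1 c2 z : pt) : R :=
  progress_pt eps (swap c1) (swap z) + progress_pt eps c2 z.

Lemma progress_bounds eps px py Y0 :
  0 <= px <= 1 -> 0 <= py <= 1 -> 0 <= progress eps px py Y0 <= 3.
Proof. intros. unfold progress. destruct Rle_dec; lra. Qed.

Lemma potential_bounds eps c1 c2 z :
  in_unit_square c1 -> in_unit_square c2 -> 0 <= potential eps c1 c2 z <= 6.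
Proof.
  intros [] []. unfold potential, progress_pt, swap; simpl.
  pose proof (progress_bounds eps (snd c1) (fst c1) (fst z)).
  pose proof (progress_bounds eps (fst c2) (snd c2) (snd z)). lra.
Qed.

(* One round for both cops: since the robber moves by at most r, one of his
   coordinate displacements is at most r/sqrt 2, so one cop gains r/2 while
   the other loses at most r/5; the potential drops by r/4. *)
Lemma pair_step r s eps n x (c1 c2 z0 z : pt) :
  0 < r -> r <= 3/2 -> 0 < s -> s <= r/1000000 -> s <= eps -> eps <= r/1000 ->
  (forall i, (i < n)%nat -> in_unit_square (x i)) -> condM n x r s ->
  in_unit_square c1 -> in_unit_square c2 -> in_unit_square z0 -> in_unit_square z ->
  sqd z z0 <= r^2 -> r^2 < sqd z c1 -> r^2 < sqd z c2 -> good r s eps c1 c2 z0 ->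
  exists i1 i2, (i1 < n)%nat /\ (i2 < n)%nat /\ in_ball c1 r (x i1) /\ in_ball c2 r (x i2) /\
    good r s (eps + 2*s) (x i1) (x i2) z /\
    potential (eps + 2*s) (x i1) (x i2) z + r/4 <= potential eps c1 c2 z0.
Proof.
  intros Hr Hr32 Hs Hsr Hse Her hx hM Hc1 Hc2 Hz0 Hz Hmove Hfar1 Hfar2 [G1 G2].
  assert (hx' : forall i, (i < n)%nat -> in_unit_square (swap (x i)))
    by (intros; now apply in_unit_square_swap, hx).
  assert (hM' : condM n (fun i => swap (x i)) r s) by (apply condM_swap; [lra|lra|exact hM]).
  destruct (cop_step_pt r s eps n (fun i => swap (x i)) (swap c1) (swap z0) (swap z)
              Hr Hr32 Hs Hsr Hse Her hx' hM' (in_unit_square_swap _ Hc1)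
              (in_unit_square_swap _ Hz0) (in_unit_square_swap _ Hz))
    as [i1 [Hi1 [B1 [G1' [P1 P1']]]]]; rewrite ?sqd_swap; auto.
  destruct (cop_step_pt r s eps n x c2 z0 z)
    as [i2 [Hi2 [B2 [G2' [P2 P2']]]]]; auto.
  exists i1, i2. cbv beta in *. rewrite in_ball_swap in B1 by lra.
  do 4 (split; [assumption|]). split; [split; assumption|].
  unfold potential.
  destruct (Rle_dec ((snd z - snd z0)^2) (r^2/2)) as [Hv|Hv].
  - specialize (P2' (or_intror Hv)). lra.
  - assert (Hh : (snd (swap z) - snd (swap z0))^2 <= r^2/2)
      by (unfold sqd, swap in *; simpl; lra).
    specialize (P1' (or_intror Hh)). lra.
Qed.

Lemma cop_capture n E k (c : nat -> nat) rb j :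
  (j < k)%nat -> (rb < n)%nat -> E (c j) rb -> (forall i, (i < k)%nat -> (c i < n)%nat) ->
  CopTurn n E k c rb.
Proof.
  intros Hj Hrb Hadj Hc.
  apply ct_move with (c' := fun i => if Nat.eqb i j then rb else c i).
  - intros i Hi. destruct (Nat.eqb_spec i j) as [->|]; [tauto|auto].
  - apply rt_cap. exists j. rewrite Nat.eqb_refl. auto.
Qed.

Section Chase.
Variables (n : nat) (x : nat -> pt) (r s : R).
Hypothesis hx : forall i, (i < n)%nat -> in_unit_square (x i).
Hypothesis hM : condM n x r s.
Hypothesis Hr : 0 < r.
Hypothesis Hr_small : r <= 3/2.
Hypothesis Hs : 0 < s.
Hypothesis Hs_small : s <= r/1000000.

Definition cops_valid (c : nat -> nat) : Prop := (c 0%nat < n)%nat /\ (c 1%nat < n)%nat.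

Lemma cops_valid_all c : cops_valid c -> forall i, (i < 2)%nat -> (c i < n)%nat.
Proof. intros [] i Hi. destruct i as [|[|]]; auto; lia. Qed.

Lemma chase_round eps c rb0 rb :
  cops_valid c -> (rb0 < n)%nat -> (rb < n)%nat -> in_ball (x rb0) r (x rb) ->
  s <= eps -> eps <= r/1000 -> good r s eps (x (c 0%nat)) (x (c 1%nat)) (x rb0) ->
  CopTurn n (geo_adj x r) 2 c rb \/
  exists i1 i2, (i1 < n)%nat /\ (i2 < n)%nat /\
    geo_adj x r (c 0%nat) i1 /\ geo_adj x r (c 1%nat) i2 /\
    good r s (eps + 2*s) (x i1) (x i2) (x rb) /\
    potential (eps + 2*s) (x i1) (x i2) (x rb) + r/4 <=
      potential eps (x (c 0%nat)) (x (c 1%nat)) (x rb0).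
Proof.
  intros Hc Hrb0 Hrb Hmove Hse Her Hgood.
  assert (Hr0 : 0 <= r) by lra.
  destruct (Rle_dec (edist (x (c 0%nat)) (x rb)) r) as [Hadj|Hfar1].
  { left. apply (cop_capture _ _ _ _ _ 0); auto using cops_valid_all. }
  destruct (Rle_dec (edist (x (c 1%nat)) (x rb)) r) as [Hadj|Hfar2].
  { left. apply (cop_capture _ _ _ _ _ 1); auto using cops_valid_all. }
  right. destruct Hc as [Hc0 Hc1].
  apply (pair_step r s eps n x); auto.
  - rewrite sqd_sym. now apply in_ball_iff.
  - now apply sqd_of_not_in_ball.
  - now apply sqd_of_not_in_ball.
Qed.

(* With potential at most K r/4 and precision budget for K more rounds, the
   cops win: each round costs r/4 of potential and 2s of precision. *)
Lemma chase (K : nat) : forall eps c rb0 rb,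
  cops_valid c -> (rb0 < n)%nat -> (rb < n)%nat -> in_ball (x rb0) r (x rb) ->
  s <= eps -> eps + 2*s*INR K <= r/1000 ->
  good r s eps (x (c 0%nat)) (x (c 1%nat)) (x rb0) ->
  potential eps (x (c 0%nat)) (x (c 1%nat)) (x rb0) <= INR K * (r/4) ->
  CopTurn n (geo_adj x r) 2 c rb.
Proof.
  induction K as [|K IH]; intros eps c rb0 rb Hc Hrb0 Hrb Hmove Hse Heps Hgood Hpot.
  - simpl in Heps, Hpot.
    destruct (chase_round eps c rb0 rb) as [Hwin|[i1 [i2 [Hi1 [Hi2 [_ [_ [_ Hpot']]]]]]]];
      auto; try lra.
    pose proof (potential_bounds (eps + 2*s) (x i1) (x i2) (x rb) (hx i1 Hi1) (hx i2 Hi2)).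
    lra.
  - pose proof (pos_INR K). rewrite S_INR in *.
    destruct (chase_round eps c rb0 rb)
      as [Hwin|[i1 [i2 [Hi1 [Hi2 [B1 [B2 [Hgood' Hpot']]]]]]]]; auto; try nra.
    apply ct_move with (c' := fun j => if Nat.eqb j 0 then i1 else i2).
    + intros j Hj. destruct j as [|[|]]; simpl; [auto|auto|lia].
    + apply rt_move. intros rb' [Hrb' Hstep].
      apply (IH (eps + 2*s) _ rb); unfold cops_valid; simpl; auto; try lra.
      destruct Hstep as [->|Hstep]; [apply in_ball_center; lra|exact Hstep].
Qed.
End Chase.

Lemma nat_above t : 0 <= t -> exists K : nat, t <= INR K <= t + 1.
Proof.
  intros Ht. destruct (archimed t) as [H1 H2]. exists (Z.to_nat (up t)).
  rewrite INR_IZR_INZ, Z2Nat.id; [lra|]. apply le_IZR. lra.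
Qed.

(* Since s < r^2/10^10, the precision grows by 2s per round and stays below
   r/1000 over the 24/r + 1 rounds needed to exhaust a potential of 6. *)
Lemma round_budget r s : 0 < r -> r <= 3/2 -> 0 < s -> s < r^2 / 10^10 ->
  exists K : nat, 6 <= INR K * (r/4) /\ s + 2*s*INR K <= r/1000.
Proof.
  intros Hr Hr32 Hs Hsr. destruct (nat_above (24/r)) as [K [HK1 HK2]].
  { apply Rlt_le, Rdiv_lt_0_compat; lra. }
  exists K. assert (Ht : 24 / r * r = 24) by (field; lra).
  assert (Hsr' : s * 10000000000 < r * r) by (simpl in Hsr; lra).
  split; [nra|].
  assert (Hst : s * (24 / r) * r < 24 * r * r / 10000000000) by (rewrite Rmult_assoc, Ht; nra).
  assert (s * (24 / r) < 24 * r / 10000000000) by nra.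
  nra.
Qed.

Lemma guards_start r s px py X0 Y0 :
  0 <= px <= s -> 0 <= py <= s -> 0 <= Y0 -> guards r s s px py X0 Y0.
Proof.
  intros Hpx Hpy HY0. split; [now left|]. unfold aligned.
  destruct (Rle_dec (Y0 - py) s); [left; apply Rabs_le_iff; lra|right; lra].
Qed.

Lemma good_start r s (p z : pt) :
  0 < s -> in_ball (0, 0) s p -> in_unit_square p -> in_unit_square z -> good r s s p p z.
Proof.
  intros Hs Hp [Hpx Hpy] [Hzx Hzy]. rewrite in_ball_iff in Hp by lra.
  destruct (sq_sum_bound (fst p) (snd p) s) as [Hp1 Hp2];
    [lra|unfold sqd in Hp; simpl in Hp; nra|].
  rewrite Rabs_le_iff in Hp1, Hp2.
  split; apply guards_start; simpl; lra.
Qed.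

(* If r > 3/2 > sqrt 2 the graph is complete. *)
Lemma unit_square_close p q r : 3/2 < r -> in_unit_square p -> in_unit_square q -> edist p q <= r.
Proof.
  intros Hr [Hpx Hpy] [Hqx Hqy]. change (in_ball p r q). apply in_ball_iff; [lra|]. unfold sqd. nra.
Qed.

Theorem mainTheorem8 (n : nat) (x : nat -> pt) (r s : R)
  (hx : forall i, (i < n)%nat -> in_unit_square (x i))
  (hs0 : 0 < s) (hsr2 : s < r ^ 2 / 10 ^ 10) (hrs : s <= r)
  (hM : condM n x r s) :
  cop_number_le n (geo_adj x r) 2.
Proof.
  assert (Hr : 0 < r) by lra.
  assert (Horigin : in_unit_square (0, 0)) by (split; simpl; lra).
  destruct (hM (0, 0) (0, 0)) as [v0 [Hv0 [_ Bv0]]];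
    [exact Horigin|exact Horigin|apply in_ball_center; lra|].
  exists 2%nat. split; [lia|]. exists (fun _ => v0). split; [auto|]. intros rb Hrb.
  destruct (Rle_dec r (3/2)) as [Hr32|Hr32].
  - destruct (round_budget r s Hr Hr32 hs0 hsr2) as [K [HK HKeps]].
    assert (Hs_small : s <= r / 1000000) by (simpl in hsr2; nra).
    apply (chase n x r s hx hM Hr Hr32 hs0 Hs_small K s _ rb rb); auto; try lra.
    + split; assumption.
    + apply in_ball_center; lra.
    + apply good_start; auto.
    + pose proof (potential_bounds s (x v0) (x v0) (x rb) (hx v0 Hv0) (hx v0 Hv0)). lra.
  - apply (cop_capture _ _ _ _ _ 0); auto.
    apply unit_square_close; auto; lra.
Qed.
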